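(* For every $v\in\overline{C}$, the set $T(v)$ is a clique in $G$.
   Context: All graphs are simple. $\mathcal{G}^*$ denotes the class of graphs in which any two distinct odd cycles share at most one edge. Standing setting: $G\in\mathcal{G}^*$ is $2$-connected, and $C$ is a longest odd cycle of $G$ with $|C|\ge 5$. We also write $C$ for its vertex set. Let $\overline{C}=V(G)\setminus C$, assumed nonempty. For $v\in\overline{C}$ and $w\in C$, $v$ touches $w$ if there is a $v,w$-path meeting $C$ only at $w$. $T(v)=\{w\in C: v \text{ touches } w\}$. *)

From mathcomp Require Import all_boot.
Set Implicit Arguments. Unset Strict Implicit. Unset Printing Implicit Defensive.

Section Graphs.
Variables (T : finType) (e : rel T).

Definition simple_graph : Prop := symmetric e /\ irreflexive e.

Definition is_cycle (c : seq T) : Prop :=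
  [/\ 3 <= size c, uniq c & cycle e c].

Definition odd_cycle (c : seq T) : Prop := is_cycle c /\ odd (size c).

Definition cycle_edges (c : seq T) : {set {set T}} :=
  [set [set x; next c x] | x in c].

(* Class G*: any two distinct odd cycles (distinct as subgraphs, i.e. different
   edge sets) share at most one edge. *)
Definition in_Gstar : Prop :=
  forall c1 c2, odd_cycle c1 -> odd_cycle c2 ->
    cycle_edges c1 != cycle_edges c2 ->
    #|cycle_edges c1 :&: cycle_edges c2| <= 1.

Definition del_rel (x : T) : rel T := fun a b => [&& e a b, a != x & b != x].

Definition two_connected : Prop :=
  [/\ 2 < #|T|,
      (forall u v, connect e u v) &
      (forall x u v, u != x -> v != x -> connect (del_rel x) u v)].

Definition longest_odd_cycle (C : seq T) : Prop :=
  odd_cycle C /\ forall D, odd_cycle D -> size D <= size C.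

Definition touches (C : seq T) (v w : T) : Prop :=
  v \notin C /\ w \in C /\
  exists p : seq T, [/\ path e v p, last v p = w, uniq (v :: p) &
                        forall u, u \in v :: p -> u \in C -> u = w].

Definition touch_set (C : seq T) (v : T) : T -> Prop := fun w => touches C v w.

Definition is_clique (S : T -> Prop) : Prop :=
  forall x y, S x -> S y -> x != y -> e x y.

End Graphs.

From mathcomp Require Import all_boot.
From mathcomp Require Import zify.

Set Implicit Arguments. Unset Strict Implicit. Unset Printing Implicit Defensive.

(* If w1, w2 in T(v) were non-adjacent, the two paths from v to them would give
   a w1,w2-path Q meeting C only at its ends.  The vertices w1, w2 cut C into
   two arcs of length at least 2, and closing each arc with Q gives a cycle;
   the two lengths add up to |C| + 2|Q|, so one of these cycles is odd.  It
   contains the first and last edge of its arc, both edges of C, but it also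
   contains an edge of Q, so it is an odd cycle different from C sharing two
   edges with it, which G* forbids. *)

Section CycleEdges.
Variables (T : finType) (e : rel T).
Implicit Types (c l m A B : seq T) (x y a b : T).

Lemma cycle_edges_rot i c : uniq c -> cycle_edges (rot i c) = cycle_edges c.
Proof.
move=> Uc; apply/setP => E; apply/imsetP/imsetP => -[x xc ->]; exists x;
  by rewrite ?mem_rot ?(next_rot i Uc) in xc *.
Qed.

Lemma mem_cycle_edges_cat l a b m :
  uniq (l ++ a :: b :: m) -> [set a; b] \in cycle_edges (l ++ a :: b :: m).
Proof.
move=> U; rewrite -(cycle_edges_rot (size l) U) rot_size_cat.
by apply/imsetP; exists a; rewrite ?mem_head //= eqxx.
Qed.

Lemma cycle_edges_mem c a b : [set a; b] \in cycle_edges c -> b \in c.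
Proof.
case/imsetP => z zc E; have : b \in [set a; b] by rewrite !inE eqxx orbT.
by rewrite E !inE => /orP[] /eqP ->; rewrite ?mem_next.
Qed.

Lemma cycle_edges_arc_ends x y A B (c := x :: A ++ y :: B) : uniq c ->
  [set x; head y A] \in cycle_edges c /\ [set last x A; y] \in cycle_edges c.
Proof.
move=> U; split.
  by case: A @c U => [|a A] /= U; apply: (@mem_cycle_edges_cat [::]).
case/lastP: A @c U => [|A a] /= U; first exact: (@mem_cycle_edges_cat [::]).
rewrite last_rcons cat_rcons in U *; exact: (@mem_cycle_edges_cat (x :: A)).
Qed.

Lemma card_cycle_edges_common_arc x y A B B' :
  uniq (x :: A ++ y :: B) -> uniq (x :: A ++ y :: B') -> A != [::] ->
  1 < #|cycle_edges (x :: A ++ y :: B) :&: cycle_edges (x :: A ++ y :: B')|.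
Proof.
move=> U U' nA.
have ne_ends : [set x; head y A] != [set last x A; y].
  case: A nA U {U'} => // a A _ /= /andP[xC /andP[aC _]].
  apply: contraNneq xC => E; have : y \in [set x; a] by rewrite E !inE eqxx orbT.
  rewrite !inE => /orP[] /eqP Ey; first by rewrite -Ey !(mem_cat, inE) eqxx !orbT.
  by move: aC; rewrite -Ey !(mem_cat, inE) eqxx !orbT.
have [e1 e2] := cycle_edges_arc_ends U; have [e1' e2'] := cycle_edges_arc_ends U'.
have ends_common : [set [set x; head y A]; [set last x A; y]] \subset
    cycle_edges (x :: A ++ y :: B) :&: cycle_edges (x :: A ++ y :: B').
  by apply/subsetP => E; rewrite !inE => /orP[] /eqP ->; rewrite ?e1 ?e1' ?e2 ?e2'.
by have := subset_leq_card ends_common; rewrite cards2 ne_ends.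
Qed.

Lemma is_cycle_replace_arc x y A B r :
  is_cycle e (x :: A ++ y :: B) -> A != [::] -> path e y (rcons r x) ->
  uniq r -> {in r, forall u, u \notin x :: A ++ y :: B} ->
  is_cycle e (x :: A ++ y :: r).
Proof.
move=> [_ U cC] nA pr ur rC; split.
- by case: A nA {U cC rC} => // a A _; rewrite /= size_cat /=; lia.
- have arcE s : x :: A ++ y :: s = (x :: A ++ [:: y]) ++ s by rewrite /= -catA.
  move: U; rewrite (arcE B) (arcE r) !cat_uniq ur andbT => /and3P[-> _ _] /=.
  by apply/hasPn => u /rC; rewrite (arcE B) mem_cat; apply: contra => ->.
- by move: cC; rewrite /= !rcons_cat !cat_path /= pr => /and3P[-> -> _].
Qed.

Hypothesis Gstar : in_Gstar e.

Lemma Gstar_detour_even x y A B r :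
  odd_cycle e (x :: A ++ y :: B) -> ~~ e x y -> r != [::] ->
  path e y (rcons r x) -> uniq r -> {in r, forall u, u \notin x :: A ++ y :: B} ->
  ~~ odd (size (x :: A ++ y :: r)).
Proof.
move=> [cC oC] nxy nr pr ur rC; apply/negP => oD.
have nA : A != [::].
  by apply: contraNneq nxy => A0; case: cC => _ _; rewrite A0 /= => /andP[].
have cD := is_cycle_replace_arc cC nA pr ur rC.
have ne_edges : cycle_edges (x :: A ++ y :: r) != cycle_edges (x :: A ++ y :: B).
  case: r nr pr ur rC cD {oD} => // r0 r _ _ _ rC [_ UD _].
  apply: contraTneq (rC r0 (mem_head _ _)) => E; apply/negPn.
  apply: (@cycle_edges_mem _ y); rewrite -E.
  exact: (@mem_cycle_edges_cat (x :: A)).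
have := Gstar (conj cD oD) (conj cC oC) ne_edges.
case: cD cC => _ UD _ [_ UC _].
by rewrite leqNgt card_cycle_edges_common_arc.
Qed.

End CycleEdges.

Section Bridges.
Variables (T : finType) (e : rel T).
Implicit Types (C q s : seq T) (x y v : T).

Lemma shorten_bridge C x y s :
  path e x s -> last x s = y -> x != y ->
  {in s, forall u, u \in C -> u = x \/ u = y} ->
  exists q, [/\ path e x (rcons q y), uniq q & {in q, forall u, u \notin C}].
Proof.
move=> ps <-; case: (shortenP ps) => s' ps' Us' sub_s'.
case/lastP: s' ps' Us' sub_s' => [|q z] /=; first by rewrite eqxx.
rewrite last_rcons mem_rcons inE rcons_uniq negb_or => pq /and3P[/andP[_ xq] zq Uq].
move=> sub_q _ sC; exists q; split=> // u uq; apply/negP => uC.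
have /sub_q us : u \in rcons q z by rewrite mem_rcons inE uq orbT.
have [Eu|Eu] := sC u us uC; subst u.
  by rewrite uq in xq.
by rewrite uq in zq.
Qed.

Hypothesis e_sym : symmetric e.

Lemma path_rcons_rev x q y : path e x (rcons q y) -> path e y (rcons (rev q) x).
Proof.
rewrite -rev_path last_rcons belast_rcons rev_cons => pq.
by rewrite -(@eq_path _ (fun a b => e b a)) // => a b; rewrite e_sym.
Qed.

Lemma touches_bridge C v w1 w2 :
  touches e C v w1 -> touches e C v w2 -> w1 != w2 ->
  exists q, [/\ path e w1 (rcons q w2), uniq q & {in q, forall u, u \notin C}].
Proof.
move=> [vC [w1C [p1 [pp1 l1 _ p1C]]]] [_ [_ [p2 [pp2 l2 _ p2C]]]] nw12.
case/lastP: p1 pp1 l1 p1C => [/= _ Ev|p1 y1]; first by rewrite Ev w1C in vC.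
rewrite last_rcons => pp1 Ey1 p1C; subst y1.
apply: (@shorten_bridge _ _ _ (rcons (rev p1) v ++ p2)) => //.
- by rewrite cat_path path_rcons_rev //= last_rcons.
- by rewrite last_cat last_rcons.
move=> u; rewrite mem_cat mem_rcons inE mem_rev -orbA => /or3P[/eqP->|up1|up2] uC.
- by rewrite uC in vC.
- by left; apply: p1C => //; rewrite inE mem_rcons inE up1 !orbT.
- by right; apply: p2C; rewrite // inE up2 orbT.
Qed.

Lemma odd_cycle_rot i C : odd_cycle e C -> odd_cycle e (rot i C).
Proof.
by case=> -[s3 U cC] oC; rewrite /odd_cycle /is_cycle size_rot rot_uniq rot_cycle.
Qed.

Hypothesis Gstar : in_Gstar e.

Lemma Gstar_bridge_adj C x y q :
  odd_cycle e C -> x \in C -> y \in C -> x != y ->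
  path e x (rcons q y) -> uniq q -> {in q, forall u, u \notin C} -> e x y.
Proof.
move=> oC xC yC nxy pq Uq qC; case: q pq Uq qC => [/andP[] //|q0 q] pq Uq qC.
apply/negPn/negP => nexy; have [[_ UC _] _] := oC.
case: (rot_to_arc UC xC yC nxy) => i A B _ _ Ci.
have oCi := odd_cycle_rot i oC; rewrite Ci in oCi.
have Cj : y :: B ++ x :: A = rot (size (x :: A)) (x :: A ++ y :: B).
  by rewrite (rot_size_cat (x :: A)).
have oCj := odd_cycle_rot (size (x :: A)) oCi; rewrite -Cj in oCj.
have memCi u : (u \in x :: A ++ y :: B) = (u \in C) by rewrite -Ci mem_rot.
have memCj u : (u \in y :: B ++ x :: A) = (u \in C) by rewrite Cj mem_rot.
case: (boolP (odd (size (x :: A ++ y :: rev (q0 :: q))))) => oD.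
  apply: negP oD; apply: (Gstar_detour_even Gstar oCi nexy) => //.
  - by rewrite -size_eq0 size_rev.
  - exact: path_rcons_rev.
  - by rewrite rev_uniq.
  - by move=> u; rewrite mem_rev memCi; apply: qC.
have oDj : odd (size (y :: B ++ x :: q0 :: q)).
  have [_ oddC] := oCi; move: oD oddC; rewrite /= !size_cat /= size_rev /=.
  by rewrite !oddD /=; case: (odd (size A)); case: (odd (size B)); case: (odd (size q)).
apply/negP: oDj; apply: (Gstar_detour_even Gstar oCj) => //.
- by rewrite e_sym.
- by move=> u; rewrite memCj; apply: qC.
Qed.

End Bridges.

Theorem mainTheorem5 (T : finType) (e : rel T) (C : seq T) :
  simple_graph e -> in_Gstar e -> two_connected e ->
  longest_odd_cycle e C -> 5 <= size C ->
  forall v : T, v \notin C ->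
  is_clique e (touch_set e C v).
Proof.
move=> [e_sym _] Gstar _ [oC _] _ v _ w1 w2 tw1 tw2 nw12.
have [q [pq Uq qC]] := touches_bridge e_sym tw1 tw2 nw12.
have [_ [w1C _]] := tw1; have [_ [w2C _]] := tw2.
exact: (Gstar_bridge_adj e_sym Gstar oC w1C w2C nw12 pq Uq qC).
Qed.
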